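(* Let $\mathcal F\subseteq\mathcal G$ be two prime lattice filters of an MV-algebra $\mathcal L$ with $\mathcal K(\mathcal F)=\mathcal K(\mathcal G)$. Then $$\mathcal K(\mathcal F\sqsubseteq\!\!\to\mathcal G)=\mathcal K(\mathcal F).$$
   Context: $\mathcal L=(L,\oplus,\lnot,0)$ is an MV-algebra. We write $1=\lnot 0$, $x\otimes y=\lnot(\lnot x\oplus\lnot y)$, and $x\to y=\lnot x\oplus y$, and use the usual lattice order. A lattice filter is a nonempty upward-closed subset closed under $\wedge$. It is prime if it is proper and $a\vee b\in\mathcal F$ implies $a\in\mathcal F$ or $b\in\mathcal F$. For an upward-closed $\mathcal F$ and $a\in L$, let $\mathcal F_a=\{z: z\to a\notin\mathcal F\}$. The kernel is $\mathcal K(\mathcal F)=\{z:\forall a\notin\mathcal F,\ z\to a\notin\mathcal F\}$. For $\mathcal F\subseteq\mathcal G$ we put $\mathcal F\sqsubseteq\!\!\to\mathcal G=\bigcap_{a\in L\setminus\mathcal G}\mathcal F_a$. *)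

Record MVAlgebra := {
  mv_car :> Type;
  mv_oplus : mv_car -> mv_car -> mv_car;
  mv_neg : mv_car -> mv_car;
  mv_zero : mv_car;
  mv_oplus_assoc : forall x y z, mv_oplus x (mv_oplus y z) = mv_oplus (mv_oplus x y) z;
  mv_oplus_comm : forall x y, mv_oplus x y = mv_oplus y x;
  mv_oplus_zero : forall x, mv_oplus x mv_zero = x;
  mv_neg_neg : forall x, mv_neg (mv_neg x) = x;
  mv_oplus_one : forall x, mv_oplus x (mv_neg mv_zero) = mv_neg mv_zero;
  mv_lukasiewicz : forall x y,
    mv_oplus (mv_neg (mv_oplus (mv_neg x) y)) y =
    mv_oplus (mv_neg (mv_oplus (mv_neg y) x)) x
}.

Section MVDefs.
Variable L : MVAlgebra.

Definition mv_one : L := mv_neg L (mv_zero L).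
Definition mv_otimes (x y : L) : L :=
  mv_neg L (mv_oplus L (mv_neg L x) (mv_neg L y)).
Definition mv_impl (x y : L) : L := mv_oplus L (mv_neg L x) y.
Definition mv_le (x y : L) : Prop := mv_impl x y = mv_one.
Definition mv_join (x y : L) : L :=
  mv_oplus L (mv_neg L (mv_oplus L (mv_neg L x) y)) y.
Definition mv_meet (x y : L) : L :=
  mv_neg L (mv_join (mv_neg L x) (mv_neg L y)).

Definition upward_closed (F : L -> Prop) : Prop :=
  forall x y, F x -> mv_le x y -> F y.

Definition lattice_filter (F : L -> Prop) : Prop :=
  (exists x, F x) /\ upward_closed F /\
  (forall x y, F x -> F y -> F (mv_meet x y)).

Definition prime_filter (F : L -> Prop) : Prop :=
  lattice_filter F /\ (exists x, ~ F x) /\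
  (forall a b, F (mv_join a b) -> F a \/ F b).

Definition Fsub (F : L -> Prop) (a : L) : L -> Prop :=
  fun z => ~ F (mv_impl z a).

Definition kernel (F : L -> Prop) : L -> Prop :=
  fun z => forall a, ~ F a -> ~ F (mv_impl z a).

(* F [=-> G = intersection over a in L \ G of F_a *)
Definition filter_impl (F G : L -> Prop) : L -> Prop :=
  fun z => forall a, ~ G a -> Fsub F a z.

End MVDefs.

Arguments mv_impl {L}.
Arguments mv_le {L}.
Arguments mv_join {L}.
Arguments mv_meet {L}.
Arguments upward_closed {L}.
Arguments lattice_filter {L}.
Arguments prime_filter {L}.
Arguments Fsub {L}.
Arguments kernel {L}.
Arguments filter_impl {L}.

From Stdlib Require Import Classical.

(* Write H = F ⊑→ G, so z ∈ H iff z → a ∉ F for every a ∉ G.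

   K(F) ⊆ K(H): if b ∉ H is witnessed by a ∉ G with b → a ∈ F, then for
   z ∈ K(F) = K(G) the element z → a lies outside G, and the suffixing law
   b → a ≤ (z → b) → (z → a) shows that z → b ∉ H.

   K(H) ⊆ K(F): the key fact is that d → s ∈ K(F) whenever d ∉ G and s ∈ G;
   otherwise both d → s and s → d would send some elements of the
   complement of F into F, and prelinearity together with primeness of F
   gives a contradiction.  Given z ∈ K(H) \ K(F), pick y ∉ F with z → y ∈ F
   and c ∉ G with z → c ∈ G.  Then b = z ⊗ (y → c) ∉ H, hence
   z → (z → b) ∉ H; yet z → (z → b) dominates y → (z → c), which lies in
   H because d → (z → c) ∈ K(F) for every d ∉ G. *)

Section MVArithmetic.
Variable L : MVAlgebra.
Local Notation "x ⊕ y" := (mv_oplus L x y) (at level 50, left associativity).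
Local Notation "¬ x" := (mv_neg L x) (at level 35, right associativity).
Local Notation zero := (mv_zero L).
Local Notation one := (mv_one L).
Implicit Types a b c d e p q s t u v w x y z W X P Y : L.

Lemma oplus_assoc x y z : x ⊕ (y ⊕ z) = x ⊕ y ⊕ z.
Proof. apply mv_oplus_assoc. Qed.

Lemma oplus_comm x y : x ⊕ y = y ⊕ x.
Proof. apply mv_oplus_comm. Qed.

Lemma oplus_left_comm x y z : x ⊕ (y ⊕ z) = y ⊕ (x ⊕ z).
Proof. rewrite !oplus_assoc, (oplus_comm x y); reflexivity. Qed.

Lemma oplus_zero x : x ⊕ zero = x.
Proof. apply mv_oplus_zero. Qed.

Lemma zero_oplus x : zero ⊕ x = x.
Proof. rewrite oplus_comm; apply oplus_zero. Qed.

Lemma neg_neg x : ¬ ¬ x = x.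
Proof. apply mv_neg_neg. Qed.

Lemma oplus_one x : x ⊕ one = one.
Proof. apply mv_oplus_one. Qed.

Lemma one_oplus x : one ⊕ x = one.
Proof. rewrite oplus_comm; apply oplus_one. Qed.

Lemma neg_one : ¬ one = zero.
Proof. apply neg_neg. Qed.

Lemma lukasiewicz x y : ¬ (¬ x ⊕ y) ⊕ y = ¬ (¬ y ⊕ x) ⊕ x.
Proof. apply mv_lukasiewicz. Qed.

Lemma neg_oplus_self x : ¬ x ⊕ x = one.
Proof.
  pose proof (lukasiewicz x one) as E.
  rewrite oplus_one, neg_one, zero_oplus in E. congruence.
Qed.

Lemma oplus_neg_self x : x ⊕ ¬ x = one.
Proof. rewrite oplus_comm; apply neg_oplus_self. Qed.

Lemma impl_one_l a : mv_impl one a = a.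
Proof. unfold mv_impl. rewrite neg_one; apply zero_oplus. Qed.

Lemma impl_refl x : mv_impl x x = one.
Proof. apply neg_oplus_self. Qed.

Lemma le_decompose a b : mv_le a b -> b = a ⊕ ¬ (¬ b ⊕ a).
Proof.
  unfold mv_le, mv_impl; intro H.
  pose proof (lukasiewicz a b) as E. rewrite H, neg_one, zero_oplus in E.
  rewrite (oplus_comm a). exact E.
Qed.

Lemma oplus_cut X P Y : X ⊕ P = one -> ¬ P ⊕ Y = one -> X ⊕ Y = one.
Proof.
  intros H1 H2.
  assert (H1' : mv_le (¬ X) P) by (unfold mv_le, mv_impl; rewrite neg_neg; exact H1).
  apply le_decompose in H1'. apply le_decompose in H2.
  rewrite H2, H1', <- !oplus_assoc, oplus_assoc, oplus_neg_self, one_oplus.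
  reflexivity.
Qed.

(* Modus ponens: x ⊗ (x → y) ≤ y. *)
Lemma modus_ponens x y : ¬ x ⊕ ¬ (¬ x ⊕ y) ⊕ y = one.
Proof.
  rewrite <- oplus_assoc, lukasiewicz, oplus_left_comm, neg_oplus_self, oplus_one.
  reflexivity.
Qed.

Lemma le_refl a : mv_le a a.
Proof. apply impl_refl. Qed.

Lemma le_trans a b c : mv_le a b -> mv_le b c -> mv_le a c.
Proof. unfold mv_le, mv_impl; intros; eapply oplus_cut; eauto. Qed.

Lemma le_neg a b : mv_le a b -> mv_le (¬ b) (¬ a).
Proof. unfold mv_le, mv_impl; rewrite neg_neg, oplus_comm; auto. Qed.

Lemma le_zero z : mv_le z zero -> z = zero.
Proof.
  unfold mv_le, mv_impl; rewrite oplus_zero; intro H.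
  rewrite <- (neg_neg z), H. apply neg_one.
Qed.

Lemma le_oplus_l a b t : mv_le a b -> mv_le (a ⊕ t) (b ⊕ t).
Proof.
  unfold mv_le, mv_impl; intro H.
  assert (E : ¬ (a ⊕ t) ⊕ t ⊕ a = one)
    by (rewrite <- oplus_assoc, (oplus_comm t a), neg_oplus_self; reflexivity).
  pose proof (oplus_cut _ _ _ E H) as R.
  rewrite <- oplus_assoc, (oplus_comm t b) in R. exact R.
Qed.

Lemma le_oplus_r a b t : mv_le a b -> mv_le (t ⊕ a) (t ⊕ b).
Proof. rewrite (oplus_comm t a), (oplus_comm t b). apply le_oplus_l. Qed.

Lemma impl_antitone x x' a : mv_le x x' -> mv_le (mv_impl x' a) (mv_impl x a).
Proof. intro H. apply le_oplus_l, le_neg, H. Qed.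

Lemma impl_monotone t a b : mv_le a b -> mv_le (mv_impl t a) (mv_impl t b).
Proof. apply le_oplus_r. Qed.

Lemma join_as_impl a b : mv_join a b = mv_impl (mv_impl a b) b.
Proof. reflexivity. Qed.

Lemma join_comm a b : mv_join a b = mv_join b a.
Proof. apply lukasiewicz. Qed.

Lemma le_join_l a b : mv_le a (mv_join a b).
Proof. unfold mv_le, mv_impl, mv_join. rewrite oplus_left_comm, oplus_comm, oplus_neg_self. reflexivity. Qed.

Lemma le_join_r a b : mv_le b (mv_join a b).
Proof. unfold mv_le, mv_impl, mv_join. rewrite oplus_left_comm, neg_oplus_self, oplus_one. reflexivity. Qed.

Lemma join_of_le a c : mv_le a c -> mv_join a c = c.
Proof. unfold mv_le, mv_impl, mv_join; intro H. rewrite H, neg_one, zero_oplus; reflexivity. Qed.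

Lemma join_monotone a b c : mv_le b c -> mv_le (mv_join a b) (mv_join a c).
Proof.
  intro H. rewrite (join_comm a b), (join_comm a c). unfold mv_join.
  apply le_oplus_l, le_neg, le_oplus_l, le_neg, H.
Qed.

Lemma join_lub a b c : mv_le a c -> mv_le b c -> mv_le (mv_join a b) c.
Proof. intros Ha Hb. rewrite <- (join_of_le _ _ Ha). apply join_monotone, Hb. Qed.

Lemma meet_glb w p q : mv_le w p -> mv_le w q -> mv_le w (mv_meet p q).
Proof.
  intros Hp Hq. unfold mv_meet.
  assert (E : mv_le (mv_join (¬ p) (¬ q)) (¬ w)) by (apply join_lub; apply le_neg; auto).
  apply le_neg in E. rewrite neg_neg in E. exact E.
Qed.

Lemma meet_le_l p q : mv_le (mv_meet p q) p.
Proof.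
  unfold mv_le, mv_impl, mv_meet, mv_join.
  rewrite !neg_neg, <- oplus_assoc, (oplus_comm (¬ q) p), neg_oplus_self. reflexivity.
Qed.

Lemma meet_le_r p q : mv_le (mv_meet p q) q.
Proof.
  unfold mv_le, mv_impl, mv_meet, mv_join.
  rewrite !neg_neg, <- oplus_assoc, neg_oplus_self, oplus_one. reflexivity.
Qed.

Lemma meet_as_otimes x y : mv_meet x y = mv_otimes L x (mv_impl x y).
Proof.
  unfold mv_meet, mv_join, mv_otimes, mv_impl. rewrite !neg_neg. f_equal.
  pose proof (lukasiewicz (¬ y) (¬ x)) as E. rewrite !neg_neg in E.
  rewrite (oplus_comm (¬ x)), <- E, (oplus_comm y). reflexivity.
Qed.

Lemma otimes_impl_comm x y :
  mv_otimes L x (mv_impl x y) = mv_otimes L y (mv_impl y x).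
Proof. rewrite <- !meet_as_otimes. unfold mv_meet. f_equal. apply join_comm. Qed.

(* x = (x ∧ y) ⊕ ¬(x → y): x splits into its meet with y and its excess over y. *)
Lemma meet_oplus_excess x y : mv_otimes L x (mv_impl x y) ⊕ ¬ mv_impl x y = x.
Proof.
  unfold mv_otimes, mv_impl.
  rewrite lukasiewicz, neg_neg, (oplus_comm (¬ x ⊕ y)), oplus_assoc, oplus_neg_self,
    one_oplus, neg_one, zero_oplus.
  reflexivity.
Qed.

Lemma excess_disjoint x y : mv_meet (¬ mv_impl x y) (¬ mv_impl y x) = zero.
Proof.
  set (u := ¬ mv_impl x y). set (v := ¬ mv_impl y x).
  set (c := mv_otimes L x (mv_impl x y)).
  set (w := mv_meet u v).
  assert (Hcu : c ⊕ u = x) by apply meet_oplus_excess.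
  assert (Hcv : c ⊕ v = y) by (unfold c; rewrite otimes_impl_comm; apply meet_oplus_excess).
  assert (Hcw : mv_le (c ⊕ w) c).
  { apply le_trans with (mv_meet x y); [| rewrite meet_as_otimes; apply le_refl].
    apply meet_glb.
    - rewrite <- Hcu. apply le_oplus_r, meet_le_l.
    - rewrite <- Hcv. apply le_oplus_r, meet_le_r. }
  assert (Hw : mv_le w (¬ c)).
  { apply le_trans with u; [apply meet_le_l|].
    unfold mv_le, mv_impl, u, c, mv_otimes, mv_impl. rewrite !neg_neg.
    rewrite oplus_left_comm, oplus_neg_self, oplus_one. reflexivity. }
  apply le_zero. apply le_trans with (mv_meet w (¬ c)).
  - apply meet_glb; [apply le_refl | exact Hw].
  - unfold mv_le, mv_impl, mv_meet, mv_join. rewrite !neg_neg, oplus_zero, (oplus_comm w c).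
    exact Hcw.
Qed.

Lemma prelinearity x y e :
  mv_le (mv_meet (mv_impl (mv_impl x y) e) (mv_impl (mv_impl y x) e)) e.
Proof.
  set (t := mv_meet _ _).
  assert (Hexcess : mv_le (¬ mv_impl t e) (mv_meet (¬ mv_impl x y) (¬ mv_impl y x))).
  { apply meet_glb; unfold mv_le, mv_impl; rewrite neg_neg, <- oplus_assoc, (oplus_comm e);
      [apply meet_le_l | apply meet_le_r]. }
  rewrite excess_disjoint in Hexcess. unfold mv_le, mv_impl in Hexcess.
  rewrite neg_neg, oplus_zero in Hexcess. exact Hexcess.
Qed.

Lemma impl_suffixing z a b : mv_le (mv_impl b a) (mv_impl (mv_impl z b) (mv_impl z a)).
Proof.
  pose proof (modus_ponens z b) as H1. pose proof (modus_ponens b a) as H2.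
  rewrite <- oplus_assoc in H2.
  pose proof (oplus_cut _ _ _ H1 H2) as R. unfold mv_le, mv_impl.
  rewrite <- oplus_assoc, (oplus_left_comm (¬ (¬ z ⊕ b)) (¬ (¬ b ⊕ a))),
    (oplus_left_comm (¬ z) (¬ (¬ b ⊕ a))), (oplus_left_comm (¬ z) (¬ (¬ z ⊕ b))) in R.
  exact R.
Qed.

Lemma impl_otimes_chain z y c :
  mv_le (mv_impl z y) (mv_impl (mv_otimes L z (mv_impl y c)) c).
Proof.
  unfold mv_le, mv_impl, mv_otimes, mv_impl. rewrite neg_neg, <- oplus_assoc.
  assert (H1 : ¬ (¬ z ⊕ y) ⊕ ¬ z ⊕ y = one)
    by (rewrite <- oplus_assoc, (oplus_comm (¬ z) y), neg_oplus_self; reflexivity).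
  pose proof (modus_ponens y c) as H2. rewrite <- oplus_assoc in H2.
  pose proof (oplus_cut _ _ _ H1 H2) as R. rewrite <- oplus_assoc in R. exact R.
Qed.

Lemma impl_exchange_otimes z y c :
  mv_le (mv_impl y (mv_impl z c))
        (mv_impl z (mv_impl z (mv_otimes L z (mv_impl y c)))).
Proof.
  unfold mv_le, mv_impl, mv_otimes, mv_impl. set (W := ¬ y ⊕ c).
  assert (H1 : ¬ (¬ z ⊕ W) ⊕ ¬ z ⊕ W = one)
    by (rewrite <- oplus_assoc, (oplus_comm (¬ (¬ z ⊕ W))), oplus_neg_self; reflexivity).
  assert (H2 : ¬ W ⊕ (¬ z ⊕ ¬ (¬ z ⊕ ¬ W)) = one)
    by (rewrite oplus_assoc, (oplus_comm (¬ W) (¬ z)), oplus_neg_self; reflexivity).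
  pose proof (oplus_cut _ _ _ H1 H2) as R. rewrite <- oplus_assoc in R. unfold W in R.
  rewrite (oplus_left_comm (¬ z) (¬ y)) in R. exact R.
Qed.

End MVArithmetic.

Section Kernels.
Variable L : MVAlgebra.

Lemma not_forall_witness {A : Type} (P Q : A -> Prop) :
  ~ (forall a, P a -> ~ Q a) -> exists a, P a /\ Q a.
Proof.
  intro H. apply NNPP. intro Hno. apply H. intros a Pa Qa. apply Hno. exists a. auto.
Qed.

Lemma not_kernel (F : L -> Prop) z :
  ~ kernel F z -> exists a, ~ F a /\ F (mv_impl z a).
Proof. apply not_forall_witness. Qed.

Lemma not_filter_impl (F G : L -> Prop) b :
  ~ filter_impl F G b -> exists a, ~ G a /\ F (mv_impl b a).
Proof. intro H. apply not_forall_witness. intro Hall. apply H. exact Hall. Qed.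

Lemma kernel_mem (K : L -> Prop) z : K (mv_one L) -> kernel K z -> K z.
Proof.
  intros K1 Kz. apply NNPP. intro nKz. apply (Kz z nKz). rewrite impl_refl. exact K1.
Qed.

Lemma filter_impl_one (F G : L -> Prop) :
  (forall x, F x -> G x) -> filter_impl F G (mv_one L).
Proof.
  intros FG a nGa Fa. apply nGa, FG. rewrite impl_one_l in Fa. exact Fa.
Qed.

Variable F : L -> Prop.
Hypothesis F_up : upward_closed F.

Lemma kernel_modus_ponens x x' : kernel F (mv_impl x x') -> F x -> F x'.
Proof.
  intros K Fx. apply NNPP. intro nFx'. apply (K x' nFx').
  apply (F_up x); [exact Fx | apply le_join_l].
Qed.

Lemma kernel_up k k' : kernel F k -> mv_le k k' -> kernel F k'.
Proof.
  intros K Hle a nFa Fa. apply (K a nFa). apply (F_up _ _ Fa). apply impl_antitone, Hle.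
Qed.

Lemma filter_impl_up (G : L -> Prop) : upward_closed (filter_impl F G).
Proof.
  intros w w' Hw Hle a nGa Fa. apply (Hw a nGa). apply (F_up _ _ Fa).
  apply impl_antitone, Hle.
Qed.

Lemma kernel_sub_filter_impl (G : L -> Prop) :
  (forall z, kernel F z -> kernel G z) ->
  forall z, kernel F z -> kernel (filter_impl F G) z.
Proof.
  intros KFG z KFz b nHb Hzb.
  destruct (not_filter_impl _ _ _ nHb) as [a [nGa Fba]].
  apply (Hzb (mv_impl z a)); [exact (KFG z KFz a nGa) |].
  apply (F_up _ _ Fba), impl_suffixing.
Qed.

End Kernels.

Section PrimeFilters.
Variable L : MVAlgebra.
Variables F G : L -> Prop.
Hypothesis F_up : upward_closed F.
Hypothesis F_meet : forall x y, F x -> F y -> F (mv_meet x y).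
Hypothesis F_prime : forall a b, F (mv_join a b) -> F a \/ F b.
Hypothesis G_up : upward_closed G.
Hypothesis F_sub_G : forall x, F x -> G x.
Hypothesis kernel_FG : forall z, kernel F z -> kernel G z.
Hypothesis kernel_GF : forall z, kernel G z -> kernel F z.

Lemma kernel_impl_out_in d s : ~ G d -> G s -> kernel F (mv_impl d s).
Proof.
  intros nGd Gs. apply NNPP. intro nK.
  destruct (not_kernel _ _ _ nK) as [a [nFa Fa]].
  assert (nK' : ~ kernel F (mv_impl s d)).
  { intro K'. apply nGd. exact (kernel_modus_ponens _ G G_up s d (kernel_FG _ K') Gs). }
  destruct (not_kernel _ _ _ nK') as [a' [nFa' Fa']].
  set (e := mv_join a a').
  (* e ∉ F by primeness, yet both (d → s) → e and (s → d) → e lie in F. *)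
  assert (nFe : ~ F e) by (intro Fe; destruct (F_prime a a' Fe); auto).
  assert (Fds : F (mv_impl (mv_impl d s) e))
    by exact (F_up _ _ Fa (impl_monotone _ _ _ _ (le_join_l _ a a'))).
  assert (Fsd : F (mv_impl (mv_impl s d) e))
    by exact (F_up _ _ Fa' (impl_monotone _ _ _ _ (le_join_r _ a a'))).
  exact (nFe (F_up _ _ (F_meet _ _ Fds Fsd) (prelinearity _ d s e))).
Qed.

Lemma kernel_filter_impl_sub z : kernel (filter_impl F G) z -> kernel F z.
Proof.
  set (H := filter_impl F G). intro KHz. apply NNPP. intro nKFz.
  destruct (not_kernel _ _ _ nKFz) as [y [nFy Fzy]].
  assert (nKGz : ~ kernel G z) by (intro K; exact (nKFz (kernel_GF _ K))).
  destruct (not_kernel _ _ _ nKGz) as [c [nGc Gzc]].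
  (* Since 1 ∈ H, also z ∈ H, so z → c ∉ F. *)
  assert (Hz : H z) by exact (kernel_mem _ _ _ (filter_impl_one _ _ _ F_sub_G) KHz).
  assert (nFzc : ~ F (mv_impl z c)) by exact (Hz c nGc).
  (* b = z ⊗ (y → c) lies outside H, as witnessed by c. *)
  set (b := mv_otimes L z (mv_impl y c)).
  assert (nHb : ~ H b) by (intro Hb; exact (Hb c nGc (F_up _ _ Fzy (impl_otimes_chain _ z y c)))).
  (* y → (z → c) ∈ H: otherwise some d ∉ G has (y → (z → c)) → d ∈ F; as
     d → (z → c) ∈ K(F), this forces y ∨ (z → c) ∈ F, contradicting primeness. *)
  assert (Hyzc : H (mv_impl y (mv_impl z c))).
  { intros d nGd Fd.
    assert (Kd : kernel F (mv_impl (mv_impl (mv_impl y (mv_impl z c)) d)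
                                   (mv_join y (mv_impl z c)))).
    { apply (kernel_up _ _ F_up _ _ (kernel_impl_out_in d _ nGd Gzc)).
      rewrite join_as_impl. apply impl_suffixing. }
    destruct (F_prime _ _ (kernel_modus_ponens _ _ F_up _ _ Kd Fd)); auto. }
  (* Hence z → (z → b) ∉ H, although it dominates y → (z → c) ∈ H. *)
  apply (KHz _ (KHz _ nHb)).
  apply (filter_impl_up _ _ F_up _ _ _ Hyzc), impl_exchange_otimes.
Qed.

End PrimeFilters.

Theorem mainTheorem11 (L : MVAlgebra) (F G : L -> Prop) :
  prime_filter F -> prime_filter G ->
  (forall x, F x -> G x) ->
  (forall z, kernel F z <-> kernel G z) ->
  forall z, kernel (filter_impl F G) z <-> kernel F z.
Proof.
  intros [[_ [F_up F_meet]] [_ F_prime]] [[_ [G_up _]] _] F_sub_G KFG z.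
  split.
  - apply (kernel_filter_impl_sub L F G F_up F_meet F_prime G_up F_sub_G);
      intro; apply KFG.
  - apply kernel_sub_filter_impl; [exact F_up | intro; apply KFG].
Qed.
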